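(* Let $(L,\sqsubseteq)$ be a countably complete lattice, $F:L\to L$ monotone and countably continuous, and $a\in L^\omega$ with $a_n\sqsubseteq a_{n+1}$ for all $n$. Define $c_m=\inf_{n\ge m}\sup_{k\ge n}F^k(a_k)$. Then $F(c_m)\sqsubseteq c_m$ for all $m\in\omega$.
   Context: A countably complete lattice is a lattice in which every countable subset (including $\emptyset$) has a supremum and an infimum. $F$ is countably continuous if $F(\sup S)=\sup F(S)$ for every nonempty countable $S\subseteq L$. $F^k$ is the $k$-fold iterate. *)

From mathcomp Require Import all_boot all_order.
Set Implicit Arguments. Unset Strict Implicit. Unset Printing Implicit Defensive.
Import Order.TTheory.
Local Open Scope order_scope.

Section CountLattice.
Context {disp : Order.disp_t} {T : latticeType disp}.

Definition upper_bound (S : T -> Prop) (x : T) : Prop := forall y, S y -> y <= x.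
Definition lower_bound (S : T -> Prop) (x : T) : Prop := forall y, S y -> x <= y.

Definition is_sup (S : T -> Prop) (x : T) : Prop :=
  upper_bound S x /\ forall z, upper_bound S z -> x <= z.
Definition is_inf (S : T -> Prop) (x : T) : Prop :=
  lower_bound S x /\ forall z, lower_bound S z -> z <= x.

(* S is countable (possibly empty or finite): enumerated by some nat -> option T *)
Definition countable_set (S : T -> Prop) : Prop :=
  exists e : nat -> option T, forall x, S x <-> exists n, e n = Some x.

Definition countably_complete : Prop :=
  forall S : T -> Prop, countable_set S ->
    (exists x, is_sup S x) /\ (exists x, is_inf S x).

Definition image (F : T -> T) (S : T -> Prop) : T -> Prop :=
  fun y => exists x, S x /\ y = F x.

Definition countably_continuous (F : T -> T) : Prop :=
  forall S : T -> Prop, countable_set S -> (exists x, S x) ->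
    forall s, is_sup S s -> is_sup (image F S) (F s).

End CountLattice.

From mathcomp Require Import all_boot all_order.
Import Order.TTheory.
Local Open Scope order_scope.

(* Each s n = sup_{k >= n} F^k (a k) is a pre-fixpoint of F: by continuity
   F (s n) is the sup of the F^(k+1) (a k), and each of these lies below
   F^(k+1) (a (k+1)), a member of the same tail set since a is increasing.
   For monotone F an infimum of pre-fixpoints is again a pre-fixpoint, so
   c = inf_{n >= m} s n is one. *)

Section PreFixpoints.
Context {disp : Order.disp_t} {T : latticeType disp}.
Implicit Types (F : T -> T) (S : T -> Prop).

Lemma iter_homo {F} : {homo F : x y / x <= y} ->
  forall k, {homo iter k F : x y / x <= y}.
Proof. by move=> Fmono k x y lexy; elim: k => [|k IHk] //=; apply: Fmono. Qed.

Lemma countable_tail (f : nat -> T) n :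
  countable_set (fun x => exists k, (n <= k)%N /\ x = f k).
Proof.
exists (fun j => Some (f (n + j))) => x; split.
- by move=> [k [lenk ->]]; exists (k - n); rewrite subnKC.
- by move=> [j [<-]]; exists (n + j); rewrite leq_addr.
Qed.

Lemma continuous_sup_prefixpoint {F S s} :
  countably_continuous F -> countable_set S -> (exists x, S x) ->
  (forall x, S x -> exists2 y, S y & F x <= y) ->
  is_sup S s -> F s <= s.
Proof.
move=> Fcont cS neS FS_le supS.
have [_ leastFs] := Fcont S cS neS s supS.
apply: leastFs => _ [x [Sx ->]].
have [y Sy leFxy] := FS_le x Sx.
exact: le_trans leFxy (supS.1 y Sy).
Qed.

Lemma inf_prefixpoint {F S c} : {homo F : x y / x <= y} ->
  (forall x, S x -> F x <= x) -> is_inf S c -> F c <= c.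
Proof.
move=> Fmono Spre [lbc glbc]; apply: glbc => x Sx.
exact: le_trans (Fmono _ _ (lbc x Sx)) (Spre x Sx).
Qed.

End PreFixpoints.

Theorem mainTheorem8 (disp : Order.disp_t) (T : latticeType disp)
  (hT : countably_complete (T:=T))
  (F : T -> T) (Fmono : {homo F : x y / x <= y})
  (Fcont : countably_continuous F)
  (a : nat -> T) (ha : forall n, a n <= a n.+1)
  (s : nat -> T)
  (hs : forall n, is_sup (fun x => exists k, (n <= k)%N /\ x = iter k F (a k)) (s n))
  (m : nat) (c : T)
  (hc : is_inf (fun x => exists n, (m <= n)%N /\ x = s n) c) :
  F c <= c.
Proof.
apply: (inf_prefixpoint Fmono _ hc) => _ [n [_ ->]].
apply: (continuous_sup_prefixpoint Fcont (countable_tail _ n) _ _ (hs n)).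
  by exists (iter n F (a n)), n.
move=> _ [k [lenk ->]]; exists (iter k.+1 F (a k.+1)).
  by exists k.+1; rewrite leqW.
exact: iter_homo Fmono k.+1 _ _ (ha k).
Qed.
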